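(* Let $\Omega\subseteq\mathbb R^n$ be a bounded open set, let $p_j\to\infty$, and for each $j$ let $\xi_{p_j}\in L^{p_j}(\Omega)$ with $\xi_{p_j}\ge0$ a.e. Suppose there is $\xi_\infty\in L^\infty(\Omega)$ with $\xi_{p_j}\rightharpoonup\xi_\infty$ weakly in $L^k(\Omega)$ for every $k\in(1,\infty)$. Then $$\liminf_{j\to\infty}\int_\Omega\xi_{p_j}\,d[\mu_{p_j}(\xi_{p_j})]\ \ge\ \|\xi_\infty\|_{L^\infty(\Omega)}.$$
   Context: $|x|_{(p)}:=\sqrt{|x|^2+p^{-2}}$, $\|f\|_{\dot L^p(\Omega)}:=\big(\frac{1}{\mathcal L^n(\Omega)}\int_\Omega|f|_{(p)}^p\,d\mathcal L^n\big)^{1/p}$, and $\mu_p(\xi):=\dfrac{|\xi|_{(p)}^{p-2}\,\xi}{\mathcal L^n(\Omega)\,\|\xi\|_{\dot L^p(\Omega)}^{p-1}}\,\mathcal L^n\llcorner\Omega$, so that $\int_\Omega\xi\,d[\mu_p(\xi)]=\frac{1}{\mathcal L^n(\Omega)}\int_\Omega\frac{|\xi|_{(p)}^{p-2}\xi^2}{\|\xi\|_{\dot L^p(\Omega)}^{p-1}}\,d\mathcal L^n$. *)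

From HB Require Import structures.
From mathcomp Require Import all_boot all_order all_algebra.
From mathcomp Require Import all_classical all_reals all_analysis.
Set Implicit Arguments. Unset Strict Implicit. Unset Printing Implicit Defensive.
Import Order.TTheory GRing.Theory Num.Theory.
Import numFieldNormedType.Exports.
Local Open Scope classical_set_scope.
Local Open Scope ring_scope.

(* R^n is modelled as n.-tuple R with the library's product sigma-algebra
   (generated by the coordinate projections, i.e. the Borel sets of R^n). *)

(* [lam] is n-dimensional Lebesgue measure: it gives every closed box its
   volume.  (This determines the measure uniquely on the sigma-algebra.) *)
Definition is_lebesgue_measure_n {R : realType} (n : nat)
  (lam : {measure set (n.-tuple R) -> \bar R}) : Prop :=
  forall a b : n.-tuple R, (forall i, tnth a i <= tnth b i) ->
    lam [set x | forall i, tnth a i <= tnth x i <= tnth b i]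
    = (\prod_(i < n) (tnth b i - tnth a i))%:E.

Definition open_n {R : realType} (n : nat) (O : set (n.-tuple R)) : Prop :=
  forall x, O x -> exists2 e : R, 0 < e &
    forall y : n.-tuple R, (forall i, `|tnth y i - tnth x i| < e) -> O y.

Definition bounded_n {R : realType} (n : nat) (O : set (n.-tuple R)) : Prop :=
  exists M : R, forall x, O x -> forall i, `|tnth x i| <= M.

Section defs.
Context {R : realType} (n : nat) (lam : {measure set (n.-tuple R) -> \bar R}).

Definition in_Lp (O : set (n.-tuple R)) (p : R) (f : n.-tuple R -> R) : Prop :=
  measurable_fun O f /\
  (\int[lam]_(x in O) ((`|f x| `^ p)%:E) < +oo)%E.

Definition ess_sup_on (O : set (n.-tuple R)) (f : n.-tuple R -> R) : \bar R :=
  ereal_inf [set y : \bar R |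
     \forall x \ae lam, O x -> ((`|f x|)%:E <= y)%E].

Definition in_Linf (O : set (n.-tuple R)) (f : n.-tuple R -> R) : Prop :=
  measurable_fun O f /\ (ess_sup_on O f < +oo)%E.

Definition pabs (p x : R) : R := Num.sqrt (x ^+ 2 + (p ^+ 2)^-1).

Definition dotLnorm (O : set (n.-tuple R)) (p : R) (f : n.-tuple R -> R) : R :=
  ((fine (lam O))^-1 * \int[lam]_(x in O) (pabs p (f x) `^ p)) `^ p^-1.

(* \int_O f d[mu_p(f)]
     = (1/|O|) \int_O |f|_(p)^(p-2) f^2 / ||f||_{\dot L^p(O)}^(p-1) *)
Definition int_against_mu_p (O : set (n.-tuple R)) (p : R)
    (f : n.-tuple R -> R) : R :=
  (fine (lam O))^-1 *
  \int[lam]_(x in O) (pabs p (f x) `^ (p - 2) * f x ^+ 2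
                        / dotLnorm O p f `^ (p - 1)).

End defs.

(* If M < ||xi_inf||_oo, then for some sign s the set A = {M' < s xi_inf}
   (M < M') has positive measure.  Testing the weak convergence against s 1_A
   gives \int_A |xi_p| >= m |A| for large p (M < m < M').  Integrating the
   tangent line of t |-> t^p at m over A yields (1/|Omega|) \int |xi_p|_(p)^p
   >= (|A|/|Omega|) m^p, so N_p := ||xi_p||_{\dot L^p} >= (|A|/|Omega|)^(1/p) m,
   which tends to m.  Finally |xi|^2 = |xi|_(p)^2 - p^-2 together with
   |xi|_(p)^(p-2) <= N^-2 |xi|_(p)^p + N^(p-2) gives
   \int xi d[mu_p(xi)] >= N_p - 2 / (p^2 N_p), which exceeds M for large p. *)

From HB Require Import structures.
From mathcomp Require Import all_boot all_order all_algebra.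
From mathcomp Require Import all_classical all_reals all_analysis.
From mathcomp Require Import ring lra.
Set Implicit Arguments.
Unset Strict Implicit.
Unset Printing Implicit Defensive.

Import Order.TTheory GRing.Theory Num.Theory.
Import numFieldNormedType.Exports.
Import measurable_realfun.
Local Open Scope classical_set_scope.
Local Open Scope ring_scope.

Lemma indic_ge0 {T : Type} {R : numDomainType} (A : set T) (x : T) :
  0 <= \1_A x :> R.
Proof. by rewrite indicE; case: (x \in A). Qed.

Lemma normr_indic_le1 {T : Type} {R : numDomainType} (A : set T) (x : T) :
  `|\1_A x : R| <= 1.
Proof. by rewrite indicE; case: (x \in A); rewrite ?normr1 ?normr0. Qed.

Section powR_facts.
Context {R : realType}.
Implicit Types (p q t m u r x N : R).

(* The tangent line of [t |-> t ^ p] at [m]; it follows from Young's inequality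
   with the conjugate exponents [p] and [p / (p - 1)]. *)
Lemma powR_tangent_le p t m : 1 < p -> 0 <= t -> 0 < m ->
  m `^ (p - 1) * (p * t - (p - 1) * m) <= t `^ p.
Proof.
move=> p1 t0 m0; have p0 : 0 < p by lra.
have q0 : 0 < p / (p - 1) by apply: divr_gt0; lra.
have pq : p^-1 + (p / (p - 1))^-1 = 1 by rewrite invf_div; field; lra.
have := conjugate_powR t0 (powR_ge0 m (p - 1)) p0 q0 pq.
rewrite -powRrM.
have -> : (p - 1) * (p / (p - 1)) = p by field; lra.
set b := m `^ (p - 1); set tp := t `^ p.
have -> : m `^ p = m * b by rewrite mulr_powRB1 //; lra.
have b0 : 0 <= b by apply: powR_ge0.
have -> : tp / p + m * b / (p / (p - 1)) = (tp + b * m * (p - 1)) / p.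
  by field; lra.
rewrite ler_pdivlMr; last lra.
nra.
Qed.

Lemma powR_ge1Dln r x : 0 < r -> 1 + x * ln r <= r `^ x.
Proof. by move=> r0; rewrite /powR gt_eqF // expR_ge1Dx. Qed.

Lemma powR_sub2_le p u N : 2 <= p -> 0 < u -> 0 < N ->
  u `^ (p - 2) <= N ^- 2 * u `^ p + N `^ (p - 2).
Proof.
move=> p2 u0 N0.
have up0 := powR_ge0 u p.
have N20 : 0 <= N ^- 2 by rewrite invr_ge0 exprn_ge0 // ltW.
have [uN|Nu] := leP u N.
  have : u `^ (p - 2) <= N `^ (p - 2).
    by apply: ge0_ler_powR; rewrite ?nnegrE; lra.
  have := mulr_ge0 N20 up0; lra.
have -> : u `^ (p - 2) = u `^ p / u ^+ 2.
  by rewrite powRB ?(gt_eqF u0) ?implybT // powR_mulrn // ltW.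
have : u `^ p / u ^+ 2 <= N ^- 2 * u `^ p.
  rewrite mulrC ler_wpM2r // lef_pV2 ?posrE ?exprn_gt0 //.
  by rewrite lerXn2r ?nnegrE ?ltW.
have := powR_ge0 N (p - 2); lra.
Qed.

Lemma normr_le_powR p x : 1 <= p -> `|x| <= `|x| `^ p + 1.
Proof.
move=> p1; have [x1|x1] := leP `|x| 1.
  have := powR_ge0 `|x| p; lra.
have := le1r_powR (ltW x1) p1; lra.
Qed.

Lemma le_powR_invr_mul r m (m' : R) q : 0 < r -> 0 < m' -> m' < m -> 0 < q ->
  - (m * ln r) / (m - m') <= q -> m' <= r `^ q^-1 * m.
Proof.
move=> r0 m'0 m'm q0; rewrite ler_pdivrMr; last lra.
move=> large.
have : m' <= m * (1 + q^-1 * ln r).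
  have -> : m * (1 + q^-1 * ln r) = m' + q^-1 * (q * (m - m') + m * ln r).
    by field; lra.
  by rewrite lerDl mulr_ge0 ?invr_ge0 ?(ltW q0) //; lra.
have := ler_wpM2l (ltW (lt_trans m'0 m'm)) (powR_ge1Dln q^-1 r0).
rewrite [r `^ _ * _]mulrC; lra.
Qed.

Lemma le_sub_div_sqr_mul M (m' : R) N q : 0 <= M -> M < m' -> 1 <= q -> m' <= N ->
  2 / (m' * (m' - M)) <= q -> M <= N - 2 / (q ^+ 2 * N).
Proof.
move=> M0 Mm' q1 m'N; rewrite ler_pdivrMr; last by rewrite mulr_gt0 //; lra.
move=> large.
have : 2 / (q ^+ 2 * N) <= m' - M.
  rewrite ler_pdivrMr ?mulr_gt0 ?exprn_gt0 //; try lra.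
  have : q * m' <= q ^+ 2 * N by rewrite expr2 -mulrA ler_pM2l; nra.
  nra.
lra.
Qed.

End powR_facts.

Section pabs_facts.
Context {R : realType}.
Implicit Types (p x : R).

Lemma pabs_gt0 p x : 0 < p -> 0 < pabs p x.
Proof.
move=> p0; rewrite /pabs sqrtr_gt0.
have : 0 < (p ^+ 2)^-1 by rewrite invr_gt0 exprn_gt0.
have := sqr_ge0 x; lra.
Qed.

Lemma pabs_sqr p x : pabs p x ^+ 2 = x ^+ 2 + (p ^+ 2)^-1.
Proof. by rewrite /pabs sqr_sqrtr // addr_ge0 ?sqr_ge0 ?invr_ge0 ?sqr_ge0. Qed.

Lemma normr_le_pabs p x : 0 < p -> `|x| <= pabs p x.
Proof.
by move=> p0; rewrite -sqrtr_sqr /pabs ler_wsqrtr // lerDl invr_ge0 sqr_ge0.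
Qed.

Lemma pabs_le_normrD p x : 0 < p -> pabs p x <= `|x| + p^-1.
Proof.
move=> p0; have ip0 : 0 <= p^-1 by rewrite invr_ge0 ltW.
rewrite /pabs -(ger0_norm (addr_ge0 (normr_ge0 x) ip0)) -sqrtr_sqr ler_wsqrtr //.
rewrite sqrrD exprVn -real_normK ?num_real //.
have : 0 <= `|x| * p^-1 *+ 2 by rewrite mulrn_wge0 // mulr_ge0.
lra.
Qed.

Lemma pabs_powR_le p x : 1 <= p ->
  pabs p x `^ p <= 2 `^ p * `|x| `^ p + (2 / p) `^ p.
Proof.
move=> p1; have p0 : 0 < p by lra.
have := pabs_le_normrD x p0; have := pabs_gt0 x p0.
have ip0 : 0 < p^-1 by rewrite invr_gt0.
have := normr_ge0 x.
have [xp|xp] := leP p^-1 `|x| => x0 u0 ule.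
- have : pabs p x `^ p <= (2 * `|x|) `^ p.
    by apply: ge0_ler_powR; rewrite ?nnegrE; lra.
  rewrite powRM //; have := powR_ge0 (2 / p) p; lra.
- have : pabs p x `^ p <= (2 / p) `^ p.
    by apply: ge0_ler_powR; rewrite ?nnegrE; lra.
  have := mulr_ge0 (powR_ge0 2 p) (powR_ge0 `|x| p); lra.
Qed.

Lemma pabs_powR_mul_sqr p x : 2 < p ->
  pabs p x `^ (p - 2) * x ^+ 2 =
  pabs p x `^ p - (p ^+ 2)^-1 * pabs p x `^ (p - 2).
Proof.
move=> p2; have u0 : 0 < pabs p x by apply: pabs_gt0; lra.
have -> : pabs p x `^ p = pabs p x `^ (p - 2) * pabs p x ^+ 2.
  rewrite -powR_mulrn ?ltW // -powRD ?(gt_eqF u0) ?implybT //.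
  by congr (_ `^ _); lra.
rewrite pabs_sqr; ring.
Qed.

End pabs_facts.

Section integrable_finite_measure.
Context d (T : measurableType d) (R : realType) (mu : {measure set T -> \bar R})
  (D : set T) (mD : measurable D) (Dfin : (mu D < +oo)%E).

Lemma integrable_cst_lt_pinfty (k : R) : mu.-integrable D (EFin \o cst k).
Proof.
apply/integrableP; split; first exact/measurable_EFinP/measurable_cst.
rewrite (eq_integral (fun _ => (`|k|)%:E)) // integral_cst //.
exact: lte_mul_pinfty.
Qed.

Lemma integrable_le_affine (f h : T -> R) (c e : R) : measurable_fun D f ->
  mu.-integrable D (EFin \o h) ->
  (forall x, D x -> `|f x| <= c * `|h x| + e) -> mu.-integrable D (EFin \o f).
Proof.
move=> mf ih fle.
have ig : mu.-integrable D (EFin \o (fun x => c * `|h x| + e)).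
  by have := integrableD mD (integrableZl mD c (integrable_norm ih))
    (integrable_cst_lt_pinfty e).
apply: (le_integrable mD _ _ ig); first exact/measurable_EFinP.
by move=> x Dx /=; rewrite lee_fin (le_trans (fle _ Dx)) // ler_norm.
Qed.

Lemma integrable_mulr_le1 (f g : T -> R) : mu.-integrable D (EFin \o f) ->
  measurable_fun D g -> (forall x, D x -> `|g x| <= 1) ->
  mu.-integrable D (EFin \o (fun x => f x * g x)).
Proof.
move=> intf mg g1; apply: (le_integrable mD _ _ intf).
  apply/measurable_EFinP/measurable_funM => //.
  exact/measurable_EFinP/(measurable_int mu).
by move=> x Dx /=; rewrite lee_fin normrM ler_piMr ?g1.
Qed.

End integrable_finite_measure.
Arguments integrable_le_affine {d T R mu D} mD Dfin {f h} c e.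

Section Lp_facts.
Context {R : realType} (n : nat) (lam : {measure set (n.-tuple R) -> \bar R})
  (O : set (n.-tuple R)) (mO : measurable O) (Ofin : (lam O < +oo)%E).
Implicit Types (p q : R) (f : n.-tuple R -> R).

Lemma measurable_normr_powR p f : measurable_fun O f ->
  measurable_fun O (fun x => `|f x| `^ p).
Proof.
move=> mf; apply: (measurableT_comp (measurable_powR p)).
exact: measurableT_comp (@normr_measurable R setT) mf.
Qed.

Lemma measurable_pabs_powR p q f : measurable_fun O f ->
  measurable_fun O (fun x => pabs p (f x) `^ q).
Proof.
move=> mf; apply: (measurableT_comp (measurable_powR q)).
apply: (eq_measurable_fun (fun x => (f x ^+ 2 + (p ^+ 2)^-1) `^ 2^-1)).
  move=> x _; rewrite powR12_sqrt // addr_ge0 ?sqr_ge0 //.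
  by rewrite invr_ge0 sqr_ge0.
apply: (measurableT_comp (measurable_powR _)).
by apply: measurable_funD; [exact: measurable_funX | exact: measurable_cst].
Qed.

Lemma in_Lp_integrable_powR p f : in_Lp lam O p f ->
  lam.-integrable O (EFin \o (fun x => `|f x| `^ p)).
Proof.
move=> [mf fin]; apply/integrableP; split.
  by apply/measurable_EFinP; exact: measurable_normr_powR.
rewrite (eq_integral (fun x => (`|f x| `^ p)%:E)) // => x _ /=.
by rewrite ger0_norm // powR_ge0.
Qed.

Lemma in_Lp_integrable p f : 1 <= p -> in_Lp lam O p f ->
  lam.-integrable O (EFin \o f).
Proof.
move=> p1 hf; apply: (integrable_le_affine mO Ofin 1 1 hf.1
  (in_Lp_integrable_powR hf)) => x _.
by rewrite mul1r (ger0_norm (powR_ge0 _ _)); exact: normr_le_powR.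
Qed.

Lemma in_Lp_integrable_pabs_powR p f : 1 <= p -> in_Lp lam O p f ->
  lam.-integrable O (EFin \o (fun x => pabs p (f x) `^ p)).
Proof.
move=> p1 hf; apply: (integrable_le_affine mO Ofin (2 `^ p) ((2 / p) `^ p)
  (measurable_pabs_powR p p hf.1) (in_Lp_integrable_powR hf)) => x _.
by rewrite !(ger0_norm (powR_ge0 _ _)); exact: pabs_powR_le.
Qed.

End Lp_facts.

Section dotLnorm_bounds.
Context {R : realType} (n : nat) (lam : {measure set (n.-tuple R) -> \bar R})
  (O : set (n.-tuple R)) (mO : measurable O) (Ofin : (lam O < +oo)%E).
Implicit Types (p m : R) (f : n.-tuple R -> R) (A : set (n.-tuple R)).

Lemma fine_measure_le A : measurable A -> A `<=` O ->
  fine (lam A) <= fine (lam O).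
Proof.
move=> mA AO.
have lamAO : (lam A <= lam O)%E by apply: le_measure; rewrite ?inE.
apply: (fine_le _ _ lamAO); rewrite ge0_fin_numE ?measure_ge0 //.
exact: le_lt_trans lamAO Ofin.
Qed.

(* Integrate the tangent-line inequality [m ^ (p - 1) (p t - (p - 1) m) <= t ^ p]
   at [t = |f|] over [A], and bound [t ^ p] by [|f|_(p) ^ p]. *)
Lemma pabs_powR_integral_ge_mass A p m f :
  measurable A -> A `<=` O -> 1 < p -> 0 < m -> in_Lp lam O p f ->
  m * fine (lam A) <= \int[lam]_(x in O) (`|f x| * \1_A x) ->
  fine (lam A) * m `^ p <= \int[lam]_(x in O) (pabs p (f x) `^ p).
Proof.
move=> mA AO p1 m0 hf mass.
have p0 : 0 < p by lra.
have mf := hf.1.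
have mfA : measurable_fun O (fun x => `|f x| * \1_A x).
  apply: measurable_funM; last exact: measurable_indic.
  exact: measurableT_comp (@normr_measurable R setT) mf.
have iF := in_Lp_integrable mO Ofin (ltW p1) hf.
have ifA : lam.-integrable O (EFin \o (fun x => `|f x| * \1_A x)).
  by have := integrable_mulr_le1 mO (integrable_norm iF) (measurable_indic mA)
    (fun x _ => normr_indic_le1 A x).
have iA : lam.-integrable O (EFin \o (fun x => (\1_A x : R))).
  apply: (integrable_le_affine mO Ofin 0 1 (measurable_indic mA) iF) => x _.
  by rewrite mul0r add0r normr_indic_le1.
set b := m `^ (p - 1).
have tangent x : O x ->
    b * (p * (`|f x| * \1_A x) - (p - 1) * m * \1_A x) <= pabs p (f x) `^ p.
  move=> Ox; rewrite indicE; case: (x \in A) => /=; last first.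
    by rewrite !mulr0 subr0 mulr0 powR_ge0.
  rewrite !mulr1; apply: le_trans (powR_tangent_le p1 (normr_ge0 (f x)) m0) _.
  apply: ge0_ler_powR; rewrite ?nnegrE ?normr_ge0 ?normr_le_pabs ?(ltW p0) //.
  exact/ltW/(pabs_gt0 _ p0).
have ipA := integrableZl mO p ifA.
have imA := integrableZl mO ((p - 1) * m) iA.
have iG := integrableB mO ipA imA.
have := le_Rintegral mO (integrableZl mO b iG)
  (in_Lp_integrable_pabs_powR mO Ofin (ltW p1) hf) tangent.
rewrite RintegralZl ?RintegralB ?RintegralZl //.
rewrite /Rintegral integral_indic // setIidl // -/(Rintegral _ _ _).
apply: le_trans; rewrite -(mulr_powRB1 (ltW m0)) -/b; last lra.
have : 0 <= b * p by rewrite mulr_ge0 ?powR_ge0 // ltW.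
nra.
Qed.

Lemma dotLnorm_ge_mass A p m f :
  measurable A -> A `<=` O -> 0 < fine (lam A) -> 1 < p -> 0 < m ->
  in_Lp lam O p f ->
  m * fine (lam A) <= \int[lam]_(x in O) (`|f x| * \1_A x) ->
  (fine (lam A) / fine (lam O)) `^ p^-1 * m <= dotLnorm lam O p f.
Proof.
move=> mA AO A0 p1 m0 hf mass.
have p0 : 0 < p by lra.
have V0 : 0 < fine (lam O) := lt_le_trans A0 (fine_measure_le mA AO).
have := pabs_powR_integral_ge_mass mA AO p1 m0 hf mass.
rewrite /dotLnorm; set a := fine (lam A); set V := fine (lam O).
set Q := \int[lam]_(x in O) _ => aQ.
have iV : 0 < V^-1 by rewrite invr_gt0.
have amp : 0 <= a * m `^ p by rewrite mulr_ge0 ?powR_ge0 // ltW.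
have -> : (a / V) `^ p^-1 * m = (V^-1 * (a * m `^ p)) `^ p^-1.
  rewrite mulrA [RHS]powRM ?mulr_ge0 ?powR_ge0 ?(ltW iV) ?(ltW A0) //.
  by rewrite -powRrM mulfV ?(gt_eqF p0) // powRr1 ?(ltW m0) // [V^-1 * a]mulrC.
have Q0 : 0 <= Q := le_trans amp aQ.
apply: ge0_ler_powR; rewrite ?nnegrE ?invr_ge0 ?(ltW p0) ?mulr_ge0 ?(ltW iV)
  ?powR_ge0 ?(ltW A0) //.
by rewrite ler_pM2l.
Qed.

Lemma int_against_mu_p_ge0 p f : 0 <= int_against_mu_p lam O p f.
Proof.
apply: mulr_ge0; first by rewrite invr_ge0 fine_ge0 ?measure_ge0.
apply: Rintegral_ge0 => x _.
apply: divr_ge0; last exact: powR_ge0.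
exact: mulr_ge0 (powR_ge0 _ _) (sqr_ge0 _).
Qed.

(* Bound [|f|_(p) ^ (p - 2)] above by [N ^ -2 |f|_(p) ^ p + N ^ (p - 2)] in
   [pabs_powR_mul_sqr] and use [N ^ p = (1/|O|) \int_O |f|_(p) ^ p]. *)
Lemma int_against_mu_p_ge_dotLnorm p f : 2 < p -> in_Lp lam O p f ->
  0 < fine (lam O) -> 0 < dotLnorm lam O p f ->
  dotLnorm lam O p f - 2 / (p ^+ 2 * dotLnorm lam O p f)
    <= int_against_mu_p lam O p f.
Proof.
move=> p2 hf V0 N0.
have p0 : 0 < p by lra.
have p1 : 1 <= p by lra.
have iU := in_Lp_integrable_pabs_powR mO Ofin p1 hf.
rewrite /int_against_mu_p.
set V := fine (lam O) in V0 *; set N := dotLnorm lam O p f in N0 *.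
set U := fun x => pabs p (f x).
set Q := \int[lam]_(x in O) U x `^ p.
have NpQ : N `^ p = V^-1 * Q.
  rewrite /N /dotLnorm -/V -/Q -powRrM mulVf ?gt_eqF // powRr1 //.
  rewrite mulr_ge0 ?invr_ge0 ?(ltW V0) // Rintegral_ge0 // => x _.
  exact: powR_ge0.
set c := N `^ (p - 1).
have c0 : 0 < c by apply: powR_gt0.
have NpcN : N `^ p = c * N by rewrite -mulr_powRB1 ?(ltW N0) // mulrC.
have Np2 : N `^ (p - 2) = c / N.
  have -> : p - 2 = p - 1 - 1 by ring.
  by rewrite powRB ?powRr1 ?ltW // (gt_eqF N0) implybT.
set al := 1 - (p ^+ 2)^-1 * N ^- 2.
set be := (p ^+ 2)^-1 * N `^ (p - 2).
have ip2 : 0 <= (p ^+ 2)^-1 by rewrite invr_ge0 exprn_ge0 // ltW.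
have mU q : measurable_fun O (fun x => U x `^ q).
  exact: measurable_pabs_powR hf.1.
have iH : lam.-integrable O (EFin \o (fun x => U x `^ (p - 2) * f x ^+ 2 / c)).
  apply: (integrable_le_affine mO Ofin c^-1 0 _ iU).
    apply: measurable_funM; last exact: measurable_cst.
    by apply: measurable_funM; [exact: mU | exact: measurable_funX hf.1].
  move=> x _; rewrite addr0 (ger0_norm (powR_ge0 _ _)) mulrC ger0_norm; last first.
    apply: mulr_ge0; first by rewrite invr_ge0 ltW.
    exact: mulr_ge0 (powR_ge0 _ _) (sqr_ge0 _).
  rewrite ler_wpM2l ?invr_ge0 ?(ltW c0) // pabs_powR_mul_sqr //.
  have := mulr_ge0 ip2 (powR_ge0 (U x) (p - 2)); rewrite /U; lra.
have iaU : lam.-integrable O (EFin \o (fun x => al * U x `^ p)).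
  by have := integrableZl mO al iU.
have ibe := integrable_cst_lt_pinfty mO Ofin be.
have iK0 : lam.-integrable O (EFin \o (fun x => al * U x `^ p - be)).
  by have := integrableB mO iaU ibe.
have iK : lam.-integrable O (EFin \o (fun x => c^-1 * (al * U x `^ p - be))).
  by have := integrableZl mO c^-1 iK0.
have pointwise x : O x ->
    c^-1 * (al * U x `^ p - be) <= U x `^ (p - 2) * f x ^+ 2 / c.
  move=> _; rewrite [leRHS]mulrC ler_pM2l ?invr_gt0 // pabs_powR_mul_sqr //.
  rewrite /al /be.
  have := ler_wpM2l ip2 (powR_sub2_le (ltW p2) (pabs_gt0 (f x) p0) N0).
  rewrite /U; lra.
apply: le_trans
  (_ : V^-1 * \int[lam]_(x in O) (c^-1 * (al * U x `^ p - be)) <= _).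
  rewrite RintegralZl // RintegralB // RintegralZl // Rintegral_cst // -/V -/Q.
  have -> : Q = V * (c * N) by rewrite -NpcN NpQ mulrA mulfV ?gt_eqF // mul1r.
  rewrite /al /be Np2 le_eqVlt; apply/orP; left; apply/eqP.
  by field; rewrite !gt_eqF.
by rewrite ler_pM2l ?invr_gt0 //; exact: le_Rintegral mO iK iH pointwise.
Qed.

Lemma int_against_mu_p_near_ge A (p : nat -> R) (xi : nat -> n.-tuple R -> R)
    (M m : R) :
  measurable A -> A `<=` O -> 0 < fine (lam A) -> 0 <= M -> M < m ->
  p @ \oo --> +oo -> (forall j, in_Lp lam O (p j) (xi j)) ->
  (\forall j \near \oo,
     m * fine (lam A) <= \int[lam]_(x in O) (`|xi j x| * \1_A x)) ->
  \forall j \near \oo, M <= int_against_mu_p lam O (p j) (xi j).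
Proof.
move=> mA AO A0 M0 Mm p_oo xiLp mass.
have V0 : 0 < fine (lam O) := lt_le_trans A0 (fine_measure_le mA AO).
set r := fine (lam A) / fine (lam O).
have r0 : 0 < r by rewrite divr_gt0.
set m' := (M + m) / 2.
have Mm' : M < m' by rewrite /m'; lra.
have m'm : m' < m by rewrite /m'; lra.
have m'0 : 0 < m' by lra.
near=> j.
have p3 : 3 <= p j by near: j; exact: cvgry_ge.
have p_r : - (m * ln r) / (m - m') <= p j by near: j; exact: cvgry_ge.
have p_M : 2 / (m' * (m' - M)) <= p j by near: j; exact: cvgry_ge.
have N_ge : m' <= dotLnorm lam O (p j) (xi j).
  apply: le_trans (le_powR_invr_mul r0 m'0 m'm _ p_r) _; first lra.
  apply: dotLnorm_ge_mass mA AO A0 _ _ (xiLp j) _; [lra | lra | by near: j].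
have N0 : 0 < dotLnorm lam O (p j) (xi j) := lt_le_trans m'0 N_ge.
apply: le_trans (int_against_mu_p_ge_dotLnorm _ (xiLp j) V0 N0); last lra.
by apply: (le_sub_div_sqr_mul M0 Mm' _ N_ge p_M); lra.
Unshelve. all: end_near.
Qed.

End dotLnorm_bounds.

Section weak_limit.
Context {R : realType} (n : nat) (lam : {measure set (n.-tuple R) -> \bar R})
  (O : set (n.-tuple R)) (mO : measurable O) (Ofin : (lam O < +oo)%E).
Implicit Types (f h : n.-tuple R -> R) (A : set (n.-tuple R)).

Lemma ess_sup_on_lt_ae f y : (ess_sup_on lam O f < y%:E)%E ->
  \forall x \ae lam, O x -> `|f x| <= y.
Proof.
rewrite /ess_sup_on => /ereal_inf_lt [z fz zy].
apply: filterS fz => x fx Ox; rewrite -lee_fin.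
exact: le_trans (fx Ox) (ltW zy).
Qed.

Lemma measurable_lt_level f (M s : R) : measurable_fun O f ->
  measurable (O `&` [set x | M < s * f x]).
Proof.
move=> mf; have msf : measurable_fun O (fun x => s * f x).
  by apply: measurable_funM => //; exact: measurable_cst.
have := msf mO `]M, +oo[%classic (measurable_itv _).
congr measurable; apply/seteqP; split => x /= [Ox fx]; split => //;
  by move: fx; rewrite /= in_itv /= andbT.
Qed.

(* If both [{M < f}] and [{M < - f}] were null, [|f| <= M] would hold a.e. *)
Lemma ess_sup_on_gt_level_set f M : measurable_fun O f ->
  (M%:E < ess_sup_on lam O f)%E ->
  exists2 s : R, `|s| = 1 & (0 < lam (O `&` [set x | (M < s * f x)%R]))%E.
Proof.
move=> mf ME; apply: contrapT => nolevel.
suff : (ess_sup_on lam O f <= M%:E)%E by rewrite leNgt ME.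
apply: ereal_inf_lbound.
have null s : `|s| = 1 -> lam.-negligible (O `&` [set x | M < s * f x]).
  move=> s1; exists (O `&` [set x | M < s * f x]); split => //.
    exact: measurable_lt_level.
  apply/eqP; rewrite eq_le measure_ge0 andbT leNgt; apply/negP => pos.
  by apply: nolevel; exists s.
apply: negligibleS (negligibleU (null 1 (normr1 _)) (null (-1) (normrN1 _))).
move=> x /= fxM.
have Ox : O x by apply: contrapT => nO; apply: fxM => /nO.
have Mfx : M < `|f x| by rewrite ltNge -lee_fin; apply/negP => h; apply: fxM.
have [fx0|fx0] := ler0P (f x).
  by right; split => //=; rewrite mulN1r; rewrite ler0_norm in Mfx.
by left; split => //=; rewrite mul1r; rewrite gtr0_norm in Mfx.
Qed.

Lemma Rintegral_ge_mul_indic A h (M c : R) :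
  measurable A -> A `<=` O -> 0 <= M -> measurable_fun O h ->
  (\forall x \ae lam, O x -> h x <= c) ->
  (forall x, O x -> M * \1_A x <= h x) ->
  M * fine (lam A) <= \int[lam]_(x in O) h x.
Proof.
move=> mA AO M0 mh hc hM.
have h0 x : O x -> 0 <= h x.
  by move=> Ox; apply: le_trans (hM x Ox); rewrite mulr_ge0 ?indic_ge0.
have lamA : lam A = (fine (lam A))%:E.
  rewrite fineK // ge0_fin_numE ?measure_ge0 //.
  by apply: le_lt_trans Ofin; apply: le_measure; rewrite ?inE.
have lower : ((M * fine (lam A))%:E <= \int[lam]_(x in O) (h x)%:E)%E.
  rewrite EFinM -lamA -(setIidl AO) -integral_indic //.
  have Aneg : M < 0 -> A = set0 by move=> /lt_le_trans/(_ M0); rewrite ltxx.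
  rewrite -(integralZl_indic mO (fun=> A) M Aneg mA).
  apply: ge0_le_integral => //.
  - by move=> x Ox; rewrite lee_fin mulr_ge0 ?indic_ge0.
  - apply/measurable_EFinP/measurable_funM; first exact: measurable_cst.
    exact: measurable_indic.
  - exact/measurable_EFinP.
have upper : (\int[lam]_(x in O) (h x)%:E <= (`|c| * fine (lam O))%:E)%E.
  rewrite EFinM fineK ?ge0_fin_numE ?measure_ge0 // -integral_cst //.
  apply: ae_ge0_le_integral => //.
  - exact/measurable_EFinP.
  - by move=> x _; rewrite /= lee_fin.
  - by apply: filterS hc => x hx Ox; rewrite lee_fin (le_trans (hx Ox)) ?ler_norm.
rewrite -lee_fin /Rintegral fineK // fin_numElt (lt_le_trans _ lower) ?ltNyr //.
by rewrite (le_lt_trans upper) ?ltry.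
Qed.

Lemma weak_limit_mass_near (xi : nat -> n.-tuple R -> R) xi_inf (q M : R) :
  0 < q -> 0 <= M -> in_Linf lam O xi_inf ->
  (\forall j \near \oo, lam.-integrable O (EFin \o xi j)) ->
  (forall g, in_Lp lam O q g ->
     (fun j => \int[lam]_(x in O) (xi j x * g x)) @ \oo
       --> \int[lam]_(x in O) (xi_inf x * g x)) ->
  (M%:E < ess_sup_on lam O xi_inf)%E ->
  exists m A, [/\ M < m, measurable A, A `<=` O, 0 < fine (lam A) &
    \forall j \near \oo,
      m * fine (lam A) <= \int[lam]_(x in O) (`|xi j x| * \1_A x)].
Proof.
move=> q0 M0 [mxi Efin] xi_int weak ME.
have [e Ee] : exists e : R, ess_sup_on lam O xi_inf = e%:E.
  by move: ME Efin; case: (ess_sup_on lam O xi_inf) => [e| |] // _ _; exists e.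
have Me : M < e by rewrite -lte_fin -Ee.
set M' := (M + e) / 2.
have [s s1 As0] : exists2 s : R, `|s| = 1 &
    (0 < lam (O `&` [set x | (M' < s * xi_inf x)%R]))%E.
  by apply: ess_sup_on_gt_level_set => //; rewrite Ee lte_fin /M'; lra.
set A := O `&` [set x | M' < s * xi_inf x].
have mA : measurable A by exact: measurable_lt_level.
have AO : A `<=` O by move=> x [].
have A0 : 0 < fine (lam A).
  apply: fine_gt0; rewrite As0 /= (le_lt_trans _ Ofin) //.
  by apply: le_measure; rewrite ?inE.
exists ((M + M') / 2), A; split => //; first by rewrite /M'; lra.
set g := fun x => s * \1_A x.
have g_abs x : `|g x| = \1_A x.
  by rewrite /g normrM s1 mul1r ger0_norm ?indic_ge0.
have g_le1 x : O x -> `|g x| <= 1 by rewrite /g normrM s1 mul1r normr_indic_le1.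
have mg : measurable_fun O g.
  by apply: measurable_funM; [exact: measurable_cst | exact: measurable_indic].
have gLq : in_Lp lam O q g.
  split => //; rewrite (eq_integral (fun x => (\1_A x)%:E)).
    rewrite integral_indic // setIidl // (le_lt_trans _ Ofin) //.
    by rewrite le_measure ?inE.
  move=> x _; rewrite g_abs indicE; case: (x \in A) => /=; first by rewrite powR1.
  by rewrite powR0 ?gt_eqF.
have limit_ge : M' * fine (lam A) <= \int[lam]_(x in O) (xi_inf x * g x).
  apply: (Rintegral_ge_mul_indic (c := e + 1)) => //.
  - by rewrite /M'; lra.
  - exact: measurable_funM.
  - have : (ess_sup_on lam O xi_inf < (e + 1)%:E)%E by rewrite Ee lte_fin; lra.
    move=> /ess_sup_on_lt_ae; apply: filterS => x xi_le Ox.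
    apply: le_trans (ler_norm _) _; rewrite normrM -[e + 1]mulr1.
    exact: ler_pM (normr_ge0 _) (normr_ge0 _) (xi_le Ox) (g_le1 x Ox).
  - move=> x Ox; rewrite /g indicE; case: (boolP (x \in A)) => /=.
      by move=> /set_mem [_ /= lt]; rewrite mulr1; lra.
    by rewrite !mulr0.
near=> j.
have ij : lam.-integrable O (EFin \o xi j) by near: j.
apply: le_trans (_ : _ <= \int[lam]_(x in O) (xi j x * g x)) _.
  apply: ltW; near: j; apply: cvgr_gt (weak g gLq) _ _.
  by apply: lt_le_trans limit_ge; rewrite ltr_pM2r // /M'; lra.
apply: le_Rintegral => //.
- exact: integrable_mulr_le1.
- by have := integrable_mulr_le1 mO (integrable_norm ij) (measurable_indic mA)
    (fun x _ => normr_indic_le1 A x).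
- move=> x _; rewrite -g_abs -normrM; exact: ler_norm.
Unshelve. all: end_near.
Qed.

End weak_limit.

Lemma bounded_n_measure_lt_pinfty {R : realType} (n : nat)
    (lam : {measure set (n.-tuple R) -> \bar R}) (O : set (n.-tuple R)) :
  is_lebesgue_measure_n lam -> bounded_n O -> measurable O -> (lam O < +oo)%E.
Proof.
move=> leb [M OM] mO; set c := `|M|; have c0 : 0 <= c := normr_ge0 M.
set a : n.-tuple R := [tuple - c | i < n].
set b : n.-tuple R := [tuple c | i < n].
have ab i : tnth a i <= tnth b i by rewrite !tnth_mktuple; lra.
have := leb a b ab; set B := [set x | _] => lamB.
have mB : measurable B.
  have -> : B = \bigcap_(i in [set: 'I_n])
      ((fun x : n.-tuple R => tnth x i) @^-1` `[- c, c]).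
    apply/seteqP; split => x /= xB i.
      by move=> _ /=; have := xB i; rewrite !tnth_mktuple in_itv.
    by have := xB i Logic.I; rewrite /= !tnth_mktuple in_itv.
  apply: fin_bigcap_measurable; first exact: finite_finset.
  move=> i _; rewrite -[X in measurable X]setTI.
  exact: (measurable_tnth i measurableT (measurable_itv _)).
have OB : O `<=` B.
  move=> x Ox i; rewrite !tnth_mktuple -ler_norml.
  exact: le_trans (OM x Ox i) (ler_norm M).
apply: (le_lt_trans (le_measure _ _ _ OB)); rewrite ?inE //.
by move: lamB => /= ->; rewrite ltry.
Qed.

Lemma limn_einf_ge_near {R : realType} (u : (\bar R)^nat) (x : \bar R) :
  (\forall j \near \oo, (x <= u j)%E) -> (x <= limn_einf u)%E.
Proof.
move=> [N _ xu]; rewrite limn_einf_lim; apply: lime_ge; first exact: is_cvg_einfs.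
exists N => // k /= Nk; apply/ereal_infP => _ [j /= kj <-].
exact/xu/(leq_trans Nk kj).
Qed.

Lemma lee_ge0_ltr_le {R : realType} (x y : \bar R) : (0 <= y)%E ->
  (forall r : R, 0 <= r -> (r%:E < x)%E -> (r%:E <= y)%E) -> (x <= y)%E.
Proof.
move=> y0 xy; apply/lee_subgt0Pr => e e0.
case: x xy => [x| |] xy; last by rewrite leNye.
- have [xe|ex] := leP x e.
    by rewrite -EFinB (le_trans _ y0) // lee_fin subr_le0.
  by rewrite -EFinB xy ?subr_ge0 ?ltW // lte_fin ltrBlDr ltrDl.
- case: y y0 xy {e0} => [y| |] // y0 xy; rewrite lee_fin in y0.
  have := xy (y + 1) (addr_ge0 y0 ler01) (ltry _).
  by rewrite lee_fin gerDl ler10.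
Qed.

Theorem mainTheorem12 (R : realType) (n : nat)
  (lam : {measure set (n.-tuple R) -> \bar R})
  (Omega : set (n.-tuple R))
  (p : nat -> R) (xi : nat -> n.-tuple R -> R) (xi_inf : n.-tuple R -> R) :
  is_lebesgue_measure_n lam ->
  open_n Omega -> bounded_n Omega -> measurable Omega ->
  p @ \oo --> +oo ->
  (forall j, in_Lp lam Omega (p j) (xi j)) ->
  (forall j, {ae lam, forall x, Omega x -> 0 <= xi j x}) ->
  in_Linf lam Omega xi_inf ->
  (forall k : R, 1 < k -> forall g : n.-tuple R -> R,
     in_Lp lam Omega (k / (k - 1)) g ->
     (fun j => \int[lam]_(x in Omega) (xi j x * g x)) @ \oo
       --> \int[lam]_(x in Omega) (xi_inf x * g x)) ->
  (ess_sup_on lam Omega xi_inf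
     <= limn_einf (fun j => (int_against_mu_p lam Omega (p j) (xi j))%:E))%E.
Proof.
move=> leb _ bdd mO p_oo xiLp _ xi_inf_Linf weak.
have Ofin := bounded_n_measure_lt_pinfty leb bdd mO.
have xi_int : \forall j \near \oo, lam.-integrable Omega (EFin \o xi j).
  near=> j; apply: (in_Lp_integrable mO Ofin _ (xiLp j)).
  by near: j; exact: cvgry_ge.
apply: lee_ge0_ltr_le => [|M M0 ME].
  apply: limn_einf_ge_near; apply: nearW => j.
  by rewrite lee_fin int_against_mu_p_ge0.
have q0 : 0 < 2 / (2 - 1) :> R by rewrite divr_gt0 ?subr_gt0 ?ltr1n.
have [m [A [Mm mA AO A0 mass]]] :=
  weak_limit_mass_near mO Ofin q0 M0 xi_inf_Linf xi_int (weak 2 (ltr1n _ 2)) ME.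
apply: limn_einf_ge_near.
have := int_against_mu_p_near_ge mO Ofin mA AO A0 M0 Mm p_oo xiLp mass.
by apply: filterS => j; rewrite lee_fin.
Unshelve. all: end_near.
Qed.
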